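(* Let $P_n$ be the path with vertex set $\{1,\dots,n\}$ and edges $\{j,j+1\}$, and let $A$ be a set of $m$ vertices with $2\le m\le n$. The following are equivalent: (1) $A$ is a maximizer of $W$ on $P_n$; (2) $A$ is a local maximizer of $W$ on $P_n$; (3) if $m$ is even, $A=\{1,\dots,\frac m2\}\cup\{n-\frac m2+1,\dots,n\}$; and if $m$ is odd, $A=\{1,\dots,\frac{m-1}{2}\}\cup\{j\}\cup\{n-\frac{m-1}{2}+1,\dots,n\}$ for some integer $j$ with $\frac{m-1}{2}<j<n-\frac{m-1}{2}+1$.
   Context: $W(A)=\sum_{\{u,v\}\subseteq A,u\ne v}d(u,v)$ over unordered pairs, $d$ the shortest-path distance. $A$ is a maximizer of $W$ if $W(A)=\max\{W(B): B\subseteq V(P_n), |B|=|A|\}$. A perturbation of $A$ is a set $(A\setminus\{u\})\cup\{v\}$ with $u\in A$, $v\notin A$, $uv$ an edge; $A$ is a local maximizer of $W$ if $W(A)\ge W(B)$ for every perturbation $B$ of $A$ (i.e. $W(A)$ equals the maximum of $W$ over perturbations of $A$). *)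

From mathcomp Require Import all_boot.
Set Implicit Arguments. Unset Strict Implicit. Unset Printing Implicit Defensive.

(* The path P_n: vertex set {1,...,n}, represented by 'I_n, where the ordinal
   i : 'I_n stands for the vertex (i+1).  Edges are {j, j+1}. *)
Definition path_edge (n : nat) (u v : 'I_n) : bool :=
  (u.+1 == v :> nat) || (v.+1 == u :> nat).

Definition pdist (n : nat) (u v : 'I_n) : nat := ((u : nat) - v) + ((v : nat) - u).

Definition W (n : nat) (A : {set 'I_n}) : nat :=
  \sum_(u in A) \sum_(v in A | u < v) pdist u v.

Definition is_maximizer (n : nat) (A : {set 'I_n}) : Prop :=
  forall B : {set 'I_n}, #|B| = #|A| -> W B <= W A.

Definition is_perturbation (n : nat) (A B : {set 'I_n}) : Prop :=
  exists u v : 'I_n, [/\ u \in A, v \notin A, path_edge u v &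
                         B = (A :\ u) :|: [set v]].

Definition is_local_maximizer (n : nat) (A : {set 'I_n}) : Prop :=
  forall B : {set 'I_n}, is_perturbation A B -> W B <= W A.

(* Condition (3), in terms of vertex labels (i+1) in {1,...,n}. *)
Definition extremal_shape (n m : nat) (A : {set 'I_n}) : Prop :=
  if ~~ odd m then
    A = [set i : 'I_n | (i.+1 <= m./2) || (n - m./2 + 1 <= i.+1)]
  else
    exists j : nat, [/\ (m.-1)./2 < j, j < n - (m.-1)./2 + 1 &
      A = [set i : 'I_n | [|| i.+1 <= (m.-1)./2, i.+1 == j
                          | n - (m.-1)./2 + 1 <= i.+1]]].

(* Moving a vertex u of A to a free neighbour v = u - 1 changes W by
   #{a in A | a > u} - #{a in A | a < v}.  So if A is a local maximizer and
   the vertex g (numbered from 0, as in 'I_n) is outside A, moving down the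
   first vertex of A above g shows #|A| <= 2g + 1; hence A contains the
   floor(m/2) smallest vertices and, by the reflection i |-> n - 1 - i, also
   the floor(m/2) largest ones, which is shape (3).  Sliding the middle vertex
   of an odd shape along the gap leaves W unchanged, so all sets of shape (3)
   have the same W; since a maximizer exists and is a local maximizer, it has
   shape (3), and so every set of shape (3) is a maximizer. *)

From mathcomp Require Import all_boot zify.
Set Implicit Arguments. Unset Strict Implicit. Unset Printing Implicit Defensive.

Section WienerPath.
Variable n : nat.
Implicit Types (S A B : {set 'I_n}) (a u v x : 'I_n).

Lemma pdistC u v : pdist u v = pdist v u.
Proof. rewrite /pdist; lia. Qed.

Lemma pdistxx u : pdist u u = 0.
Proof. rewrite /pdist; lia. Qed.

Lemma W_double S : (W S).*2 = \sum_(u in S) \sum_(v in S) pdist u v.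
Proof.
have split_pair u v :
    pdist u v = (if u < v then pdist u v else 0) + (if v < u then pdist v u else 0).
  by rewrite /pdist; case: ltngtP; lia.
under [RHS]eq_bigr => u _ do rewrite (eq_bigr _ (fun v _ => split_pair u v)) big_split.
rewrite [RHS]big_split /= [X in _ = _ + X]exchange_big -addnn /W.
by congr (_ + _); apply: eq_bigr => u _; rewrite big_mkcondr.
Qed.

Lemma W_setU1 S x : x \notin S -> W (x |: S) = W S + \sum_(a in S) pdist a x.
Proof.
move=> xS; apply: double_inj; rewrite doubleD !W_double.
under eq_bigr => u _ do rewrite big_setU1 //.
rewrite big_setU1 // pdistxx big_split /=.
have -> : \sum_(a in S) pdist x a = \sum_(a in S) pdist a x.
  by apply: eq_bigr => a _; apply: pdistC.
by rewrite add0n addnCA addnA addnn addnC.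
Qed.

Lemma W_move S u v : (v : nat).+1 = u -> u \notin S -> v \notin S ->
  W (v |: S) + \sum_(a in S) (a < v : nat) = W (u |: S) + \sum_(a in S) (u < a : nat).
Proof.
move=> vu uS vS; rewrite !W_setU1 // -!addnA; congr (_ + _); rewrite -!big_split /=.
apply: eq_bigr => a aS.
have au : (a : nat) != u := memPn uS a aS.
have av : (a : nat) != v := memPn vS a aS.
rewrite /pdist; lia.
Qed.

Lemma card_split_gap S u v : (v : nat).+1 = u -> u \notin S -> v \notin S ->
  #|S| = \sum_(a in S) (a < v : nat) + \sum_(a in S) (u < a : nat).
Proof.
move=> vu uS vS; rewrite -sum1_card -big_split /=; apply: eq_bigr => a aS.
have au : (a : nat) != u := memPn uS a aS.
have av : (a : nat) != v := memPn vS a aS.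
lia.
Qed.

Lemma sum_ord_lt i : \sum_(a : 'I_n) (a < i : nat) = minn i n.
Proof.
rewrite -(big_mkord xpredT (fun a : nat => (a < i : nat))).
elim: n => [|k IH]; first by rewrite big_geq //; lia.
by rewrite big_nat_recr //= IH; case: ltnP => /=; lia.
Qed.

Lemma sum_ord_ge i : \sum_(a : 'I_n) (i <= a : nat) = n - minn i n.
Proof.
have : \sum_(a : 'I_n) ((i <= a : nat) + (a < i : nat)) = n.
  by rewrite -[RHS]card_ord -sum1_card; apply: eq_bigr => a _; case: ltnP.
rewrite big_split /= sum_ord_lt; lia.
Qed.

Lemma sum_in_lt_le S i : \sum_(a in S) (a < i : nat) <= i.
Proof.
apply: leq_trans (_ : \sum_(a : 'I_n) (a < i : nat) <= _); last by rewrite sum_ord_lt geq_minl.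
by rewrite [leqRHS](bigID (mem S)) leq_addr.
Qed.

Lemma local_max_shift_down A u v : is_local_maximizer A ->
  u \in A -> v \notin A -> (v : nat).+1 = u ->
  #|A| <= (\sum_(a in A :\ u) (a < v : nat)).*2.+1.
Proof.
move=> locA uA vA vu; set S := A :\ u.
have uS : u \notin S by rewrite !inE eqxx.
have vS : v \notin S by rewrite !inE (negbTE vA) andbF.
have le_W : W (v |: S) <= W (u |: S).
  rewrite setD1K //; apply: locA; exists u, v; split => //.
    by rewrite /path_edge vu eqxx orbT.
  by rewrite setUC.
have := W_move vu uS vS.
rewrite (cardsD1 u A) uA add1n -/S (card_split_gap vu uS vS); lia.
Qed.

Lemma local_max_notin_card A g : is_local_maximizer A -> g \notin A -> #|A| <= g.*2.+1.
Proof.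
move=> locA gA.
have a_neq_g a : a \in A -> (a : nat) != g by move=> aA; apply: (memPn gA).
case: (boolP [exists u in A, g < u]) => [/exists_inP [u0 u0A gu0] | /exists_inPn above].
- case: (@arg_minnP _ u0 [pred u | (u \in A) && (g < u)] val); first by rewrite /= u0A.
  move=> u /andP [uA gu] u_min.
  have lt_v : u.-1 < n by have := ltn_ord u; lia.
  set v := Ordinal lt_v; have vu : (v : nat).+1 = u by rewrite /=; lia.
  have vA : v \notin A.
    apply/negP => vA; have := a_neq_g v vA; have := u_min v; rewrite /= vA; lia.
  apply: leq_trans (local_max_shift_down locA uA vA vu) _.
  rewrite ltnS leq_double; apply: leq_trans (sum_in_lt_le (A :\ u) g).
  apply: leq_sum => a /setD1P [_ aA]; have := a_neq_g a aA; have := u_min a.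
  rewrite /= aA; lia.
- rewrite -sum1_card; apply: leq_trans (leq_trans _ (sum_in_lt_le A g)) _; last lia.
  apply: leq_sum => a aA; have := a_neq_g a aA; have := above a aA; lia.
Qed.

Lemma pdist_rev u v : pdist (rev_ord u) (rev_ord v) = pdist u v.
Proof. rewrite /pdist /=; have := ltn_ord u; have := ltn_ord v; lia. Qed.

Lemma path_edge_rev u v : path_edge (rev_ord u) (rev_ord v) = path_edge u v.
Proof. rewrite /path_edge /=; have := ltn_ord u; have := ltn_ord v; lia. Qed.

Definition mirror A : {set 'I_n} := @rev_ord n @^-1: A.

Lemma in_mirror A i : (i \in mirror A) = (rev_ord i \in A).
Proof. by rewrite inE. Qed.

Lemma card_mirror A : #|mirror A| = #|A|.
Proof. exact: card_preimset rev_ord_inj. Qed.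

Lemma W_mirror A : W (mirror A) = W A.
Proof.
apply: double_inj; rewrite !W_double [RHS](reindex_inj rev_ord_inj).
apply: eq_big => [u | u _]; first by rewrite in_mirror.
rewrite [RHS](reindex_inj rev_ord_inj); apply: eq_big => [v | v _]; first by rewrite in_mirror.
by rewrite pdist_rev.
Qed.

Lemma local_max_mirror A : is_local_maximizer A -> is_local_maximizer (mirror A).
Proof.
move=> locA B [u [v [uA vA uv eqB]]]; rewrite -(W_mirror B) (W_mirror A).
rewrite in_mirror in uA; rewrite in_mirror in vA.
apply: locA; exists (rev_ord u), (rev_ord v); split; rewrite ?path_edge_rev //.
apply/setP => x; rewrite eqB !inE rev_ordK.
by rewrite !(can2_eq rev_ordK rev_ordK).
Qed.

Lemma local_max_notin_card_mirror A g : is_local_maximizer A -> g \notin A ->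
  #|A| <= (n - g.+1).*2.+1.
Proof.
move=> locA gA; rewrite -card_mirror.
by apply: (@local_max_notin_card _ (rev_ord g) (local_max_mirror locA)); rewrite in_mirror rev_ordK.
Qed.

Definition ends k : {set 'I_n} := [set i : 'I_n | (i < k) || (n - k <= i)].

Lemma card_ends k : k + k <= n -> #|ends k| = k + k.
Proof.
move=> kk; rewrite -sum1_card big_mkcond /=.
rewrite (eq_bigr (fun a : 'I_n => (a < k : nat) + (n - k <= a : nat))); last first.
  by move=> a _; rewrite inE; case: ifP; lia.
rewrite big_split /= sum_ord_lt sum_ord_ge; lia.
Qed.

Lemma ends_sub_local_max A : is_local_maximizer A -> ends #|A|./2 \subset A.
Proof.
move=> locA; apply/subsetP => i; rewrite inE; apply: contraTT => iA.
have := local_max_notin_card locA iA; have := local_max_notin_card_mirror locA iA.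
have := odd_double_half #|A|; have := ltn_ord i; lia.
Qed.

Definition extremal m A : Prop :=
  if ~~ odd m then A = ends m./2
  else exists2 j : 'I_n, j \notin ends m./2 & A = j |: ends m./2.

Lemma local_max_extremal A : is_local_maximizer A -> extremal #|A| A.
Proof.
move=> locA; have sub := ends_sub_local_max locA.
have le_An : #|A| <= n by rewrite -[leqRHS]card_ord max_card.
have := odd_double_half #|A|; rewrite /extremal; set k := #|A|./2 => dblA.
have card_k : #|ends k| = k + k by apply: card_ends; lia.
case: ifP => oddA.
  by apply/eqP; rewrite eq_sym eqEcard sub card_k; lia.
have /properP [_ [j jA jE]] : ends k \proper A by rewrite properEcard sub card_k; lia.
exists j => //; apply/eqP; rewrite eq_sym eqEcard subUset sub1set jA sub.
by rewrite cardsU1 jE card_k; lia.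
Qed.

Lemma W_ends_setU1_step k (t u : 'I_n) : (t : nat).+1 = u ->
  t \notin ends k -> u \notin ends k -> W (t |: ends k) = W (u |: ends k).
Proof.
move=> tu tE uE; have := W_move tu uE tE.
have [le_kt lt_unk] : k <= t /\ u < n - k by move: tE uE; rewrite !inE; lia.
have -> : \sum_(a in ends k) (a < t : nat) = k.
  rewrite big_mkcond (eq_bigr (fun a : 'I_n => (a < k : nat))) ?sum_ord_lt; first lia.
  by move=> a _; rewrite inE; case: ifP; lia.
have -> : \sum_(a in ends k) (u < a : nat) = k.
  rewrite big_mkcond (eq_bigr (fun a : 'I_n => (n - k <= a : nat))) ?sum_ord_ge; first lia.
  by move=> a _; rewrite inE; case: ifP; lia.
by move/addIn.
Qed.

Lemma W_ends_setU1_const k (i j : 'I_n) :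
  i \notin ends k -> j \notin ends k -> W (i |: ends k) = W (j |: ends k).
Proof.
wlog le_ij : i j / i <= j => [sym iE jE | iE].
  by case: (leqP i j) => [/sym -> | /ltnW /sym <-].
suff walk d (l : 'I_n) : i + d = l -> l \notin ends k -> W (i |: ends k) = W (l |: ends k).
  by apply: (walk (j - i)); lia.
elim: d l => [|d IH] l il lE.
  by congr (W (_ |: _)); apply: val_inj; rewrite /= -il addn0.
have lt_l : l.-1 < n by have := ltn_ord l; lia.
have l'E : Ordinal lt_l \notin ends k by move: iE lE; rewrite !inE /=; lia.
rewrite (IH (Ordinal lt_l)) /=; [apply: W_ends_setU1_step => //= | |]; lia.
Qed.

Lemma W_extremal_eq m A B : extremal m A -> extremal m B -> W A = W B.
Proof.
rewrite /extremal; case: ifP => _; first by move=> -> ->.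
by move=> [i iE ->] [j jE ->]; apply: W_ends_setU1_const.
Qed.

Lemma maximizer_local A : is_maximizer A -> is_local_maximizer A.
Proof.
move=> maxA B [u [v [uA vA _ ->]]]; apply: maxA.
by rewrite setUC cardsU1 !inE (negbTE vA) andbF (cardsD1 u A) uA.
Qed.

Lemma exists_maximizer A : exists2 B : {set 'I_n}, #|B| = #|A| & is_maximizer B.
Proof.
case: (@arg_maxnP _ A (fun B : {set 'I_n} => #|B| == #|A|) (@W n)) => //= B /eqP cardB B_max.
by exists B => // C cardC; apply: B_max; rewrite /= cardC cardB.
Qed.

Lemma extremal_maximizer A : extremal #|A| A -> is_maximizer A.
Proof.
move=> extA; have [B cardB maxB] := exists_maximizer A.
have extB := local_max_extremal (maximizer_local maxB); rewrite cardB in extB.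
by move=> C cardC; rewrite (W_extremal_eq extA extB) maxB // cardC cardB.
Qed.

Lemma extremalE m A : extremal m A <-> extremal_shape m A.
Proof.
rewrite /extremal /extremal_shape; case: ifP => [_ | /negbFE oddm].
  by split=> ->; apply/setP => i; rewrite !inE addn1 ltnS.
have -> : (m.-1)./2 = m./2 by rewrite -[in LHS](odd_double_half m) oddm add1n /= doubleK.
split=> [[j jE ->] | [j [lt_j lt_jn ->]]].
  move: jE; rewrite inE => jE; exists j.+1; split; try lia.
  by apply/setP => i; rewrite !inE eqSS addn1 ltnS orbCA.
have lt_j' : j.-1 < n by lia.
exists (Ordinal lt_j'); first by rewrite inE /=; lia.
apply/setP => i; rewrite !inE addn1 ltnS orbCA; congr (_ || _).
by apply/eqP/eqP => [ij | /(congr1 val) /= ->]; [apply: val_inj => /=; lia | lia].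
Qed.

End WienerPath.

Theorem mainTheorem11 (n m : nat) (A : {set 'I_n}) :
  2 <= m -> m <= n -> #|A| = m ->
  (is_maximizer A <-> is_local_maximizer A) /\
  (is_local_maximizer A <-> extremal_shape m A).
Proof.
move=> _ _ <-; split; split.
- exact: maximizer_local.
- by move/local_max_extremal/extremal_maximizer.
- by move/local_max_extremal/extremalE.
- by move/extremalE/extremal_maximizer/maximizer_local.
Qed.
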